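(* Let $Q$ be a finite quiver without loops or oriented 2-cycles, with vertices labelled $1,\dots,n$, of which $1,\dots,m$ are mutable. Then the cluster algebra associated to $Q$ can be quantized: there exists a quiver $Q'$ containing $Q$ as a full subquiver, whose principal part (full subquiver on the mutable vertices) coincides with that of $Q$, together with a skew-symmetric integer matrix $\Lambda$ compatible with $Q'$.
   Context: For a quiver with vertices $1,\dots,N$ of which $1,\dots,m$ are mutable and the rest frozen, let $a_{ij}$ be the number of arrows from $i$ to $j$ and $\tilde B$ the $N\times m$ matrix with $b_{ij}=a_{ji}-a_{ij}$. A skew-symmetric $N\times N$ integer matrix $\Lambda$ is compatible with the quiver if $\tilde B^T\Lambda=\tilde I$, where $\tilde I$ is the $m\times N$ matrix whose first $m$ columns form the identity $I_m$ and whose other columns are zero. In $Q'$ the added vertices are frozen. *)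

From HB Require Import structures.
From mathcomp Require Import all_boot all_order all_algebra.
Set Implicit Arguments. Unset Strict Implicit. Unset Printing Implicit Defensive.
Import Order.TTheory GRing.Theory Num.Theory.
Local Open Scope ring_scope.

(* A finite quiver on vertices 'I_N is given by a : 'I_N -> 'I_N -> nat,
   a i j = number of arrows from i to j. *)
Definition no_loops_no_2cycles (N : nat) (a : 'I_N -> 'I_N -> nat) : Prop :=
  (forall i, a i i = 0%N) /\ (forall i j, a i j = 0%N \/ a j i = 0%N).

(* Exchange matrix B~ (N x m), mutable vertices are the first m: b_ij = a_ji - a_ij *)
Definition ext_exchange_matrix (N m : nat) (hm : (m <= N)%N)
  (a : 'I_N -> 'I_N -> nat) : 'M[int]_(N, m) :=
  \matrix_(i < N, j < m) ((a (widen_ord hm j) i)%:Z - (a i (widen_ord hm j))%:Z).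

Definition ext_identity (m N : nat) : 'M[int]_(m, N) :=
  \matrix_(i < m, j < N) (((i : nat) == (j : nat)) : nat)%:Z.

Definition compatible (N m : nat) (hm : (m <= N)%N) (a : 'I_N -> 'I_N -> nat)
  (L : 'M[int]_N) : Prop :=
  L^T = - L /\ (ext_exchange_matrix hm a)^T *m L = ext_identity m N.

From HB Require Import structures.
From mathcomp Require Import all_boot all_order all_algebra.
Set Implicit Arguments. Unset Strict Implicit. Unset Printing Implicit Defensive.
Import GRing.Theory.
Local Open Scope ring_scope.

(* Adjoin to each mutable vertex i a frozen copy i' with a single arrow i -> i'.
   The extended exchange matrix becomes [B; 1] with B the one of Q, and writing
   P for the inclusion of the mutable coordinates, the block matrix
   [[0, -P], [P^T, B^T P]] is skew-symmetric (B^T P is the principal part of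
   the quiver, read as a skew-symmetric matrix) and satisfies
   [B; 1]^T L = [P^T, 0], which is the compatibility condition. *)

Section QuantizationMatrix.
Variables (R : pzRingType) (n m : nat).
Implicit Types B P : 'M[R]_(n, m).

Definition quantization_mx B P : 'M[R]_(n + m) :=
  block_mx 0 (- P) P^T (B^T *m P).

Lemma tr_quantization_mx B P :
  (B^T *m P)^T = - (B^T *m P) -> (quantization_mx B P)^T = - quantization_mx B P.
Proof.
move=> skewBP; rewrite /quantization_mx tr_block_mx opp_block_mx skewBP.
by rewrite !trmx0 oppr0 linearN /= !opprK trmxK.
Qed.

Lemma mul_tr_col_mx1_quantization_mx B P :
  (col_mx B 1%:M)^T *m quantization_mx B P = row_mx P^T 0.
Proof.
rewrite tr_col_mx trmx1 mul_row_block.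
by rewrite mulmx0 mul1mx add0r mulmxN mul1mx addNr.
Qed.

End QuantizationMatrix.

Lemma mul_pid_mx_widen (R : pzSemiRingType) (p n m : nat) (hmn : (m <= n)%N)
    (A : 'M[R]_(p, n)) :
  A *m pid_mx m = colsub (widen_ord hmn) A.
Proof.
have -> : pid_mx m = pid_mx n :> 'M[R]_(n, m).
  by rewrite -(pid_mx_minh R n m n) (minn_idPl hmn).
by rewrite (pid_mxEcol _ hmn) mulmx_colsub mulmx1.
Qed.

Section FrozenExtension.
Variables (n k : nat) (a : 'I_n -> 'I_n -> nat) (c : 'I_n -> 'I_k -> nat).

Definition add_frozen (x y : 'I_(n + k)) : nat :=
  match split x, split y with
  | inl i, inl j => a i j
  | inl i, inr l => c i l
  | inr _, _ => 0%N
  end.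

Lemma add_frozen_lshift i j : add_frozen (lshift k i) (lshift k j) = a i j.
Proof. by rewrite /add_frozen !(unsplitK (inl _)). Qed.

Lemma add_frozen_rshift l y : add_frozen (rshift n l) y = 0%N.
Proof. by rewrite /add_frozen (unsplitK (inr _)). Qed.

Lemma no_loops_no_2cycles_add_frozen :
  no_loops_no_2cycles a -> no_loops_no_2cycles add_frozen.
Proof.
move=> [loop_free cycle_free]; split=> [x | x y]; rewrite /add_frozen.
  by case: (split x).
by case: (split x) => i; case: (split y) => j; by [left | right | apply: cycle_free].
Qed.

Lemma ext_exchange_matrix_add_frozen (m : nat) (hmn : (m <= n)%N)
    (hmnk : (m <= n + k)%N) :
  ext_exchange_matrix hmnk add_frozen =
  col_mx (ext_exchange_matrix hmn a) (\matrix_(l, j) (c (widen_ord hmn j) l)%:Z).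
Proof.
have widen_lshift j : widen_ord hmnk j = lshift k (widen_ord hmn j) by exact: val_inj.
apply/matrixP=> x j; rewrite -[x]splitK; case: (split x) => i /=.
  by rewrite col_mxEu !mxE widen_lshift !add_frozen_lshift.
rewrite col_mxEd !mxE widen_lshift add_frozen_rshift subr0.
by rewrite /add_frozen (unsplitK (inl _)) (unsplitK (inr _)).
Qed.

End FrozenExtension.

Lemma ext_identity_row_mx (n k m : nat) (hmn : (m <= n)%N) :
  ext_identity m (n + k) = row_mx (pid_mx m) 0.
Proof.
apply/matrixP=> l y; rewrite -[y]splitK; case: (split y) => x /=.
  by rewrite row_mxEl !mxE (ltn_ord l) andbT natz.
rewrite row_mxEr !mxE; case: eqP => //= eq_l; move: (ltn_ord l).
by rewrite eq_l ltnNge (leq_trans hmn (leq_addr _ _)).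
Qed.

Theorem lemma4p4 (n m : nat) (hmn : (m <= n)%N) (a : 'I_n -> 'I_n -> nat) :
  no_loops_no_2cycles a ->
  exists (k : nat) (a' : 'I_(n + k) -> 'I_(n + k) -> nat) (L : 'M[int]_(n + k)),
    [/\ no_loops_no_2cycles a',
        (forall i j : 'I_n, a' (lshift k i) (lshift k j) = a i j)
      & compatible (leq_trans hmn (leq_addr k n)) a' L].
Proof.
move=> quiver_a; set c := fun (i : 'I_n) (l : 'I_m) => nat_of_bool (i == l :> nat).
set B := ext_exchange_matrix hmn a.
have lower_block : \matrix_(l, j) (c (widen_ord hmn j) l)%:Z = 1%:M :> 'M[int]_m.
  by apply/matrixP=> l j; rewrite !mxE eq_sym natz.
have skew_principal : (B^T *m pid_mx m)^T = - (B^T *m pid_mx m).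
  by apply/matrixP=> j l; rewrite (mul_pid_mx_widen hmn) !mxE opprB.
exists m, (add_frozen a c), (quantization_mx B (pid_mx m)); split.
- exact: no_loops_no_2cycles_add_frozen.
- exact: add_frozen_lshift.
split; first exact: tr_quantization_mx.
rewrite (ext_exchange_matrix_add_frozen _ _ hmn) lower_block.
by rewrite mul_tr_col_mx1_quantization_mx tr_pid_mx (ext_identity_row_mx _ hmn).
Qed.
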